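(* Consider the attack-free algorithm of the context and let $\widetilde\Lambda^k\in\mathbb R^{J\times D}$ be the matrix whose $i$-th row is $(\lambda_i^k)^\top$. Let $\sigma:=1-\widetilde\kappa\in(0,1)$ and assume the step sizes satisfy, for all $k\ge0$, $$\frac{6(\gamma^k)^2}{u_f^2J^2}\le\frac{(2-\sigma)\sigma^2}{3(3-\sigma)}\qquad\text{and}\qquad1\le\frac{(\gamma^k)^2}{(\gamma^{k+1})^2}\le\frac{2}{1+(1-\sigma^2)}.$$ Then for every $k\ge0$, $$\Big\|\widetilde\Lambda^{k+1}-\tfrac1J\widetilde{\mathbf 1}\widetilde{\mathbf 1}^\top\widetilde\Lambda^{k+1}\Big\|_F^2\le\frac{18(\gamma^{k+1})^2\widetilde\delta^2J}{\sigma^3}.$$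
   Context: Attack-free setting. $J$ agents $\mathcal J=\{1,\dots,J\}$ on an undirected connected graph with neighbor sets $\mathcal N_i$. For each $i$, $f_i:\mathbb R^D\to\mathbb R$ is $u_f$-strongly convex and $L_f$-smooth, $C_i\subset\mathbb R^D$ nonempty compact convex, $s\in\mathbb R^D$. $\widetilde g_i(\lambda)=\frac1J\max_{\theta\in C_i}\{-\lambda^\top\theta-f_i(\theta)\}+\frac1J\lambda^\top s$, with $\nabla\widetilde g_i(\lambda)=\frac1Js-\frac1J\arg\min_{\theta\in C_i}\{\lambda^\top\theta+f_i(\theta)\}$, and $\widetilde\delta^2:=\sup_\lambda\max_{i\in\mathcal J}\|\nabla\widetilde g_i(\lambda)-\frac1J\sum_{j}\nabla\widetilde g_j(\lambda)\|^2<\infty$. $\widetilde E=[\widetilde e_{ij}]\in\mathbb R^{J\times J}$ is doubly stochastic, $\widetilde e_{ij}>0$ iff $(i,j)$ is an edge or $i=j$, and $\widetilde\kappa:=\|\widetilde E-\frac1J\widetilde{\mathbf 1}\widetilde{\mathbf 1}^\top\|^2<1$ (spectral norm, $\widetilde{\mathbf 1}\in\mathbb R^J$ all-ones). Algorithm: common initialization $\lambda_i^0=\lambda^0$; $\theta_i^k=\arg\min_{\theta\in C_i}\{\theta^\top\lambda_i^k+f_i(\theta)\}$, $\lambda_i^{k+1/2}=\lambda_i^k-\gamma^k(\frac1Js-\frac1J\theta_i^k)$, $\lambda_i^{k+1}=\sum_{j\in\mathcal N_i\cup\{i\}}\widetilde e_{ij}\lambda_j^{k+1/2}$. $\|\cdot\|_F$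 is the Frobenius norm. *)

From HB Require Import structures.
From mathcomp Require Import all_boot all_order all_algebra.
From mathcomp Require Import all_classical all_reals all_analysis.
Set Implicit Arguments. Unset Strict Implicit. Unset Printing Implicit Defensive.
Import Order.TTheory GRing.Theory Num.Theory.
Import numFieldNormedType.Exports.
Local Open Scope classical_set_scope.
Local Open Scope ring_scope.

Section Defs.
Variable R : realType.

Definition dotv (D : nat) (u v : 'rV[R]_D) : R := \sum_(d < D) u 0 d * v 0 d.
Definition sqnorm (D : nat) (u : 'rV[R]_D) : R := dotv u u.
Definition sqnormc (n : nat) (u : 'cV[R]_n) : R := \sum_(i < n) u i 0 ^+ 2.

Definition frob2 (m n : nat) (M : 'M[R]_(m, n)) : R :=
  \sum_(i < m) \sum_(j < n) M i j ^+ 2.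

Definition specnorm2 (n : nat) (M : 'M[R]_n) : R :=
  sup [set r | exists x : 'cV[R]_n, sqnormc x <= 1 /\ r = sqnormc (M *m x)].

Definition cvx_set (D : nat) (C : set 'rV[R]_D) : Prop :=
  forall x y t, C x -> C y -> 0 <= t <= 1 -> C (t *: x + (1 - t) *: y).

Definition strongly_convex (D : nat) (u : R) (f : 'rV[R]_D -> R) : Prop :=
  0 < u /\
  forall x y t, 0 <= t <= 1 ->
    f (t *: x + (1 - t) *: y) <=
      t * f x + (1 - t) * f y - u / 2 * t * (1 - t) * sqnorm (x - y).

Definition is_gradient (D : nat) (f : 'rV[R]_D -> R) (x g : 'rV[R]_D) : Prop :=
  forall eps : R, 0 < eps -> exists2 del : R, 0 < del &
    forall h, sqnorm h < del ^+ 2 ->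
      (f (x + h) - f x - dotv g h) ^+ 2 <= eps ^+ 2 * sqnorm h.

Definition smooth (D : nat) (L : R) (f : 'rV[R]_D -> R) : Prop :=
  exists grad : 'rV[R]_D -> 'rV[R]_D,
    (forall x, is_gradient f x (grad x)) /\
    forall x y, sqnorm (grad x - grad y) <= L ^+ 2 * sqnorm (x - y).

Definition is_argmin (D : nat) (C : set 'rV[R]_D) (f : 'rV[R]_D -> R)
    (lam th : 'rV[R]_D) : Prop :=
  C th /\ forall t, C t -> dotv th lam + f th <= dotv t lam + f t.

(* gradient of g~_i at lambda, with am i lambda = argmin_{theta in C_i} ... *)
Definition grad_g (J D : nat) (s : 'rV[R]_D) (am : 'I_J -> 'rV[R]_D -> 'rV[R]_D)
    (i : 'I_J) (lam : 'rV[R]_D) : 'rV[R]_D :=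
  J%:R^-1 *: s - J%:R^-1 *: am i lam.

Definition delta2_set (J D : nat) (s : 'rV[R]_D) (am : 'I_J -> 'rV[R]_D -> 'rV[R]_D) :=
  [set r | exists lam (i : 'I_J),
         r = sqnorm (grad_g s am i lam - J%:R^-1 *: \sum_(j < J) grad_g s am j lam)].

Definition delta2 (J D : nat) (s : 'rV[R]_D) (am : 'I_J -> 'rV[R]_D -> 'rV[R]_D) : R :=
  sup (delta2_set s am).

Fixpoint lam_iter (J D : nat) (E : 'M[R]_J) (s : 'rV[R]_D)
    (am : 'I_J -> 'rV[R]_D -> 'rV[R]_D) (gam : nat -> R) (lam0 : 'rV[R]_D)
    (k : nat) : 'I_J -> 'rV[R]_D :=
  match k with
  | 0 => fun _ => lam0
  | k'.+1 => fun i =>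
      let prev := lam_iter E s am gam lam0 k' in
      (* lambda_j^{k'+1/2} = lambda_j^{k'} - gam k' (s/J - theta_j^{k'}/J) *)
      \sum_(j < J) E i j *:
        (prev j - gam k' *: (J%:R^-1 *: s - J%:R^-1 *: am j (prev j)))
  end.

Definition Lam_mat (J D : nat) (lam : 'I_J -> 'rV[R]_D) : 'M[R]_(J, D) :=
  \matrix_(i < J, d < D) lam i 0 d.

End Defs.

From HB Require Import structures.
From mathcomp Require Import all_boot all_order all_algebra.
From mathcomp Require Import all_classical all_reals all_analysis.
From mathcomp Require Import ring lra.
Import Order.TTheory GRing.Theory Num.Theory.
Import numFieldNormedType.Exports.
Local Open Scope classical_set_scope.
Local Open Scope ring_scope.
Set Implicit Arguments. Unset Strict Implicit.

(* Write e_k for the squared Frobenius norm of the centred iterate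
   P Lam^k, where P = I - 11^T/J.  Since E is doubly stochastic,
   P E = (E - 11^T/J) P, so one mixing step multiplies e_k by at most
   kappa = 1 - sigma, and Young's inequality splits off the gradient step:
     e_(k+1) <= (1 - sigma/2) e_k + (1-sigma)(2-sigma)/sigma gam_k^2 ||P G_k||^2.
   The dual gradients are, up to a constant and the factor -1/J, minimisers
   of u-strongly convex problems, hence 1/u-Lipschitz in lambda; comparing
   G_k with the gradients at the average of the lambda_i gives
     ||P G_k||^2 <= 2 (e_k / (u J)^2 + J delta^2).
   Starting from e_0 = 0, the step-size conditions make
   e_k <= 18 J delta^2 gam_k^2 / sigma^3 an inductive invariant. *)

Section Euclidean.
Variables (R : realType) (D : nat).
Implicit Types (x y z : 'rV[R]_D).

Lemma dotvC x y : dotv x y = dotv y x.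
Proof. by apply: eq_bigr => d _; rewrite mulrC. Qed.

Lemma dotvBl x y z : dotv (x - y) z = dotv x z - dotv y z.
Proof. by rewrite /dotv -sumrB; apply: eq_bigr => d _; rewrite !mxE mulrBl. Qed.

Lemma dotvBr x y z : dotv z (x - y) = dotv z x - dotv z y.
Proof. by rewrite !(dotvC z) dotvBl. Qed.

Lemma dotvDl x y z : dotv (x + y) z = dotv x z + dotv y z.
Proof. by rewrite /dotv -big_split; apply: eq_bigr => d _; rewrite !mxE mulrDl. Qed.

Lemma dotvZl (a : R) x y : dotv (a *: x) y = a * dotv x y.
Proof. by rewrite /dotv mulr_sumr; apply: eq_bigr => d _; rewrite !mxE mulrA. Qed.

Lemma sqnormE x : sqnorm x = \sum_(d < D) x 0 d ^+ 2.
Proof. by apply: eq_bigr => d _; rewrite expr2. Qed.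

Lemma sqnormZ (a : R) x : sqnorm (a *: x) = a ^+ 2 * sqnorm x.
Proof. by rewrite !sqnormE mulr_sumr; apply: eq_bigr => d _; rewrite mxE exprMn. Qed.

Lemma sqnorm_ge0 x : 0 <= sqnorm x.
Proof. by rewrite sqnormE; apply: sumr_ge0 => d _; exact: sqr_ge0. Qed.

Lemma sqnormBC x y : sqnorm (x - y) = sqnorm (y - x).
Proof. by rewrite !sqnormE; apply: eq_bigr => d _; rewrite !mxE; ring. Qed.

Lemma dotv_le_sqnorm (t : R) x y : 0 < t ->
  2 * dotv x y <= t * sqnorm x + sqnorm y / t.
Proof.
move=> t_gt0; rewrite /sqnorm /dotv !mulr_sumr mulr_suml -big_split /=.
apply: ler_sum => d _.
have -> : t * (x 0 d * x 0 d) + y 0 d * y 0 d / t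
          = 2 * (x 0 d * y 0 d) + (t * x 0 d - y 0 d) ^+ 2 / t.
  by field; rewrite gt_eqF.
by rewrite lerDl divr_ge0 ?sqr_ge0 ?ltW.
Qed.

End Euclidean.

Section StronglyConvexArgmin.
Variables (R : realType) (D : nat) (C : set 'rV[R]_D) (f : 'rV[R]_D -> R) (u : R).
Hypotheses (f_sc : strongly_convex u f) (C_cvx : cvx_set C).

Lemma argmin_gap_mix (lam th ph : 'rV[R]_D) (t : R) :
  is_argmin C f lam th -> C ph -> 0 <= t < 1 ->
  dotv th lam + f th + t * u / 2 * sqnorm (th - ph) <= dotv ph lam + f ph.
Proof.
move=> [Cth th_min] Cph /andP[t_ge0 t_lt1].
have t01 : 0 <= t <= 1 by rewrite t_ge0 ltW.
have := th_min _ (C_cvx Cth Cph t01); have := f_sc.2 th ph _ t01.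
rewrite dotvDl !dotvZl => sc_ineq min_ineq.
have : (1 - t) * (dotv th lam + f th + t * u / 2 * sqnorm (th - ph)
                    - (dotv ph lam + f ph)) <= 0 by lra.
by rewrite pmulr_rle0 ?subr_gt0 // subr_le0.
Qed.

Lemma argmin_strong_gap (lam th ph : 'rV[R]_D) :
  is_argmin C f lam th -> C ph ->
  dotv th lam + f th + u / 2 * sqnorm (th - ph) <= dotv ph lam + f ph.
Proof.
move=> th_min Cph; rewrite -lerBrDl.
set c := u / 2 * sqnorm (th - ph); set gap := _ - _.
have gap_mix t : 0 <= t < 1 -> t * c <= gap.
  by move/(argmin_gap_mix th_min Cph); rewrite /gap /c; lra.
have gap_ge0 : 0 <= gap by rewrite -(mul0r c); apply: gap_mix; rewrite lexx ltr01.
rewrite leNgt; apply/negP => gap_lt_c.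
have c_gt0 : 0 < c := le_lt_trans gap_ge0 gap_lt_c.
pose t := (gap / c + 1) / 2.
have t01 : 0 <= t < 1.
  have : gap / c < 1 by rewrite ltr_pdivrMr // mul1r.
  have : 0 <= gap / c by rewrite divr_ge0 // ltW.
  by rewrite /t; move=> *; apply/andP; split; lra.
have := gap_mix t t01.
rewrite (_ : t * c = (gap + c) / 2); first lra.
by rewrite /t; field; rewrite gt_eqF.
Qed.

Lemma argmin_lipschitz (lam mu th ph : 'rV[R]_D) :
  is_argmin C f lam th -> is_argmin C f mu ph ->
  sqnorm (th - ph) <= sqnorm (lam - mu) / u ^+ 2.
Proof.
move=> th_min ph_min; have u_gt0 := f_sc.1.
have gap1 := argmin_strong_gap th_min ph_min.1.
have gap2 := argmin_strong_gap ph_min th_min.1.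
rewrite sqnormBC in gap2.
have coercive : u * sqnorm (th - ph) <= dotv (th - ph) (mu - lam).
  by rewrite dotvBl !dotvBr; lra.
have young := dotv_le_sqnorm (th - ph) (mu - lam) u_gt0.
rewrite [sqnorm (mu - lam)]sqnormBC in young.
have : u * sqnorm (th - ph) <= sqnorm (lam - mu) / u by lra.
rewrite ler_pdivlMr // ler_pdivlMr ?exprn_gt0 // expr2 mulrA.
by rewrite [sqnorm _ * u]mulrC.
Qed.

End StronglyConvexArgmin.

Lemma sqrD_le2 (R : realDomainType) (a b : R) : (a + b) ^+ 2 <= 2 * a ^+ 2 + 2 * b ^+ 2.
Proof. have := sqr_ge0 (a - b); lra. Qed.

(* Young's inequality, weighted so that the contraction factor 1 - sig of the
   mixing step becomes 1 - sig/2. *)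
Lemma sqrB_le_contract (R : realFieldType) (sig a b : R) : 0 < sig ->
  (1 - sig) * (a - b) ^+ 2 <= (1 - sig / 2) * a ^+ 2 + (1 - sig) * (2 - sig) / sig * b ^+ 2.
Proof.
move=> sig_gt0.
have -> : (1 - sig / 2) * a ^+ 2 + (1 - sig) * (2 - sig) / sig * b ^+ 2 =
  (1 - sig) * (a - b) ^+ 2 + sig / 2 * (a + 2 * (1 - sig) / sig * b) ^+ 2.
  by field; rewrite gt_eqF.
by rewrite lerDl mulr_ge0 ?sqr_ge0 // divr_ge0 ?ltW.
Qed.

Section Frobenius.
Variables (R : realType) (m n : nat).
Implicit Types (A B M : 'M[R]_(m, n)).

Lemma frob2_ge0 M : 0 <= frob2 M.
Proof. by apply: sumr_ge0 => i _; apply: sumr_ge0 => j _; exact: sqr_ge0. Qed.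

Lemma frob2_row M : frob2 M = \sum_(i < m) sqnorm (row i M).
Proof. by apply: eq_bigr => i _; rewrite sqnormE; apply: eq_bigr => j _; rewrite mxE. Qed.

Lemma frob2_col M : frob2 M = \sum_(j < n) sqnormc (col j M).
Proof. by rewrite /frob2 exchange_big; apply: eq_bigr => j _; apply: eq_bigr => i _; rewrite mxE. Qed.

Lemma frob2D_le A B : frob2 (A + B) <= 2 * frob2 A + 2 * frob2 B.
Proof.
rewrite /frob2 !mulr_sumr -big_split; apply: ler_sum => i _.
rewrite !mulr_sumr -big_split; apply: ler_sum => j _.
by rewrite mxE sqrD_le2.
Qed.

Lemma frob2B_le_contract (sig g : R) A B : 0 < sig ->
  (1 - sig) * frob2 (A - g *: B)
    <= (1 - sig / 2) * frob2 A + (1 - sig) * (2 - sig) / sig * g ^+ 2 * frob2 B.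
Proof.
move=> sig_gt0; rewrite /frob2 !mulr_sumr -big_split; apply: ler_sum => i _.
rewrite !mulr_sumr -big_split; apply: ler_sum => j _.
by rewrite !mxE -mulrA -exprMn sqrB_le_contract.
Qed.

End Frobenius.

Section SpectralNorm.
Variables (R : realType) (n : nat) (W : 'M[R]_n).

Lemma sqnormc_ge0 (x : 'cV[R]_n) : 0 <= sqnormc x.
Proof. by apply: sumr_ge0 => i _; exact: sqr_ge0. Qed.

Lemma sqnormcZ (a : R) (x : 'cV[R]_n) : sqnormc (a *: x) = a ^+ 2 * sqnormc x.
Proof. by rewrite /sqnormc mulr_sumr; apply: eq_bigr => i _; rewrite mxE exprMn. Qed.

Lemma sqnormc_eq0 (x : 'cV[R]_n) : sqnormc x = 0 -> x = 0.
Proof.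
move=> x0; apply/matrixP => i j; rewrite (ord1 j) mxE.
have := psumr_eq0P (fun k _ => sqr_ge0 (x k 0)) x0 (erefl true : true).
by move/(_ i)/eqP; rewrite sqrf_eq0 => /eqP.
Qed.

Lemma specnorm2_has_ubound :
  has_ubound [set r | exists x : 'cV[R]_n, sqnormc x <= 1 /\ r = sqnormc (W *m x)].
Proof.
exists (\sum_(i < n) (\sum_(j < n) `|W i j|) ^+ 2) => _ [x [x_le1 ->]].
rewrite /sqnormc; apply: ler_sum => i _.
have x_entry_le1 j : `|x j 0| <= 1.
  have : x j 0 ^+ 2 <= 1.
    apply: le_trans x_le1; rewrite /sqnormc (bigD1 j) //= lerDl.
    by apply: sumr_ge0 => k _; exact: sqr_ge0.
  by rewrite -real_normK ?num_real // expr_le1 ?normr_ge0.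
rewrite -real_normK ?num_real //; apply: lerXn2r; rewrite ?nnegrE ?normr_ge0 //.
  by apply: sumr_ge0 => j _.
rewrite mxE; apply: le_trans (ler_norm_sum _ _ _) _.
apply: ler_sum => j _; rewrite normrM.
by rewrite ler_piMr ?normr_ge0.
Qed.

Lemma specnorm2_ge0 : 0 <= specnorm2 W.
Proof.
apply: (ub_le_sup specnorm2_has_ubound); exists 0.
by rewrite mulmx0 /sqnormc big1 // => i _; rewrite mxE expr0n.
Qed.

Lemma sqnormc_mulmx_le (x : 'cV[R]_n) : sqnormc (W *m x) <= specnorm2 W * sqnormc x.
Proof.
have [x0|x_neq0] := eqVneq (sqnormc x) 0.
  by rewrite x0 (sqnormc_eq0 x0) mulmx0 mulr0 /sqnormc big1 // => i _; rewrite mxE expr0n.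
have x_gt0 : 0 < sqnormc x by rewrite lt_def x_neq0 sqnormc_ge0.
pose q := Num.sqrt (sqnormc x).
have q_gt0 : 0 < q by rewrite sqrtr_gt0.
have qq : q ^+ 2 = sqnormc x by rewrite sqr_sqrtr // ltW.
have : sqnormc (W *m (q^-1 *: x)) <= specnorm2 W.
  apply: (ub_le_sup specnorm2_has_ubound); exists (q^-1 *: x); split => //.
  by rewrite sqnormcZ exprVn qq mulVf.
by rewrite -scalemxAr sqnormcZ exprVn qq ler_pdivrMl // mulrC.
Qed.

Lemma frob2_mulmx_le p (Y : 'M[R]_(n, p)) : frob2 (W *m Y) <= specnorm2 W * frob2 Y.
Proof.
rewrite !frob2_col mulr_sumr; apply: ler_sum => j _.
have -> : col j (W *m Y) = W *m col j Y.
  by apply/matrixP => i k; rewrite !mxE; apply: eq_bigr => l _; rewrite !mxE.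
exact: sqnormc_mulmx_le.
Qed.

End SpectralNorm.

Section Centering.
Variables (R : realType) (J : nat).
Hypothesis J_gt0 : (0 < J)%N.

Let J_neq0 : (J%:R : R) != 0. Proof. by rewrite pnatr_eq0 -lt0n. Qed.

Definition center n (X : 'M[R]_(J, n)) : 'M[R]_(J, n) :=
  X - J%:R^-1 *: (const_mx 1 *m X).

Lemma centerE n (X : 'M[R]_(J, n)) i j :
  center X i j = X i j - J%:R^-1 * \sum_(k < J) X k j.
Proof. by rewrite !mxE; under eq_bigr do rewrite mxE mul1r. Qed.

Lemma centerD n (X Y : 'M[R]_(J, n)) : center (X + Y) = center X + center Y.
Proof. by rewrite /center mulmxDr scalerDr opprD addrACA. Qed.

Lemma centerZ n (a : R) (X : 'M[R]_(J, n)) : center (a *: X) = a *: center X.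
Proof. by rewrite /center -scalemxAr scalerBr !scalerA mulrC. Qed.

Lemma row_Lam_mat D (l : 'I_J -> 'rV[R]_D) i : row i (Lam_mat l) = l i.
Proof. by apply/rowP => d; rewrite !mxE. Qed.

Lemma center_Lam_mat_const D (x : 'rV[R]_D) : center (Lam_mat (fun _ => x)) = 0.
Proof.
apply/matrixP => i d; rewrite centerE !mxE.
under eq_bigr do rewrite mxE.
by rewrite sumr_const card_ord -[x 0 d *+ J]mulr_natl mulKf // subrr.
Qed.

Lemma row_center_Lam_mat D (l : 'I_J -> 'rV[R]_D) i :
  row i (center (Lam_mat l)) = l i - J%:R^-1 *: \sum_(k < J) l k.
Proof.
apply/rowP => d; rewrite mxE centerE !mxE summxE.
by under eq_bigr do rewrite mxE.
Qed.

Lemma sum_sqr_dev_le (a : 'I_J -> R) :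
  \sum_(j < J) (a j - J%:R^-1 * \sum_(k < J) a k) ^+ 2 <= \sum_(j < J) a j ^+ 2.
Proof.
set S := \sum_(k < J) a k; set mean := J%:R^-1 * S.
rewrite (eq_bigr (fun j => a j ^+ 2 - 2 * mean * a j + mean ^+ 2)); last by move=> j _; ring.
rewrite big_split sumrB /= -mulr_sumr sumr_const card_ord -/S -mulr_natr.
have -> : S = J%:R * mean by rewrite /mean mulrA mulfV // mul1r.
have : 0 <= mean ^+ 2 * J%:R by rewrite mulr_ge0 ?sqr_ge0 ?ler0n.
lra.
Qed.

Lemma frob2_center_le n (X : 'M[R]_(J, n)) : frob2 (center X) <= frob2 X.
Proof.
rewrite /frob2 [leLHS]exchange_big [leRHS]exchange_big; apply: ler_sum => j _ /=.
under eq_bigr do rewrite centerE.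
exact: sum_sqr_dev_le.
Qed.

Lemma center_mulmx (E : 'M[R]_J) n (Y : 'M[R]_(J, n)) :
  (forall i, \sum_(j < J) E i j = 1) -> (forall j, \sum_(i < J) E i j = 1) ->
  center (E *m Y) = (E - J%:R^-1 *: const_mx 1) *m center Y.
Proof.
move=> E_row E_col.
have onesE : const_mx 1 *m E = const_mx 1 :> 'M[R]_J.
  by apply/matrixP => i j; rewrite !mxE -[RHS](E_col j); apply: eq_bigr => k _; rewrite mxE mul1r.
have Eones : E *m const_mx 1 = const_mx 1 :> 'M[R]_J.
  by apply/matrixP => i j; rewrite !mxE -[RHS](E_row i); apply: eq_bigr => k _; rewrite mxE mulr1.
have onesK : (const_mx 1 : 'M[R]_J) *m (const_mx 1 : 'M[R]_J) = J%:R *: const_mx 1.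
  apply/matrixP => i j; rewrite !mxE mulr1.
  by under eq_bigr do rewrite !mxE mulr1; rewrite sumr_const card_ord.
rewrite /center mulmxA onesE mulmxBl !mulmxBr -!scalemxAl -!scalemxAr !mulmxA.
rewrite Eones onesK -scalemxAl !scalerA mulrCA mulVf // mulr1.
by rewrite opprB addrA subrK.
Qed.

End Centering.

Lemma consensus_rate_le (R : realFieldType) (sig Dl : R) :
  0 < sig -> sig <= 1 -> 0 <= Dl ->
  (1 - sig / 2) * (18 * Dl / sig ^+ 3)
    + 2 * ((1 - sig) * (2 - sig) / sig) * ((2 - sig) * Dl / (sig * (3 - sig)) + Dl)
  <= 18 * Dl / sig ^+ 3 * (2 - sig ^+ 2) / 2.
Proof.
move=> sig_gt0 sig_le1 Dl_ge0; rewrite -subr_ge0.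
have -> : 18 * Dl / sig ^+ 3 * (2 - sig ^+ 2) / 2 - ((1 - sig / 2) * (18 * Dl / sig ^+ 3)
    + 2 * ((1 - sig) * (2 - sig) / sig) * ((2 - sig) * Dl / (sig * (3 - sig)) + Dl))
  = (1 - sig) * Dl * (19 - 13 * sig + 8 * sig ^+ 2 - 2 * sig ^+ 3) / (sig ^+ 2 * (3 - sig)).
  by field; rewrite !gt_eqF //; lra.
have sig2 : sig ^+ 2 <= 1 by rewrite expr_le1 // ltW.
have sig3 : sig ^+ 3 <= 1 by rewrite expr_le1 // ltW.
have sig2_ge0 := sqr_ge0 sig.
rewrite divr_ge0 ?mulr_ge0 //; lra.
Qed.

Lemma consensus_recursion (R : realFieldType) (sig Dl b e e' g2 g2' : R) :
  0 < sig -> sig <= 1 -> 0 <= Dl -> 0 < b -> 0 <= g2 -> 0 <= e ->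
  6 * g2 / b <= (2 - sig) * sig ^+ 2 / (3 * (3 - sig)) ->
  g2 <= 2 / (2 - sig ^+ 2) * g2' ->
  e <= 18 * Dl / sig ^+ 3 * g2 ->
  e' <= (1 - sig / 2) * e + (1 - sig) * (2 - sig) / sig * g2 * (2 * (e / b + Dl)) ->
  e' <= 18 * Dl / sig ^+ 3 * g2'.
Proof.
move=> sig_gt0 sig_le1 Dl_ge0 b_gt0 g2_ge0 e_ge0 step_small g2_growth e_le e'_le.
set K := 18 * Dl / sig ^+ 3 in e_le *.
set c := (1 - sig) * (2 - sig) / sig in e'_le.
have K_ge0 : 0 <= K by rewrite divr_ge0 ?mulr_ge0 ?exprn_ge0 // ltW.
have c_ge0 : 0 <= c by rewrite divr_ge0 ?mulr_ge0 //; lra.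
have drift : g2 * (e / b) <= g2 * ((2 - sig) * Dl / (sig * (3 - sig))).
  rewrite ler_wpM2l //; apply: le_trans (_ : K * g2 / b <= _).
    by rewrite ler_pM2r ?invr_gt0 // mulrC.
  have -> : (2 - sig) * Dl / (sig * (3 - sig))
      = K * ((2 - sig) * sig ^+ 2 / (3 * (3 - sig))) / 6.
    by rewrite /K; field; rewrite !gt_eqF //; lra.
  rewrite -mulrA -[K * _ / 6]mulrA ler_wpM2l //; lra.
have : e' <= g2 * ((1 - sig / 2) * K + 2 * c * ((2 - sig) * Dl / (sig * (3 - sig)) + Dl)).
  apply: le_trans e'_le _.
  have : (1 - sig / 2) * e <= (1 - sig / 2) * (K * g2) by rewrite ler_wpM2l //; lra.
  have := ler_wpM2l c_ge0 drift.
  nra.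
move/le_trans; apply.
apply: le_trans (ler_wpM2l g2_ge0 (consensus_rate_le sig_gt0 sig_le1 Dl_ge0)) _.
have sig2_le1 : sig ^+ 2 <= 1 by rewrite expr_le1 // ltW.
have sig2_gt0 : 0 < 2 - sig ^+ 2 by lra.
have growth : (2 - sig ^+ 2) / 2 * g2 <= g2'.
  apply: le_trans (ler_wpM2l _ g2_growth) _; first by rewrite divr_ge0 ?ltW.
  rewrite mulrA (_ : _ / 2 * _ = 1) ?mul1r //.
  by field; rewrite gt_eqF.
rewrite -/K (_ : g2 * (K * _ / 2) = K * ((2 - sig ^+ 2) / 2 * g2)); last by ring.
exact: ler_wpM2l.
Qed.

Section Iteration.
Variables (R : realType) (J D : nat) (E : 'M[R]_J) (s : 'rV[R]_D)
  (am : 'I_J -> 'rV[R]_D -> 'rV[R]_D) (gam : nat -> R) (lam0 : 'rV[R]_D) (u : R).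
Hypotheses (J_gt0 : (0 < J)%N)
  (E_row : forall i, \sum_(j < J) E i j = 1) (E_col : forall j, \sum_(i < J) E i j = 1)
  (u_gt0 : 0 < u)
  (am_lip : forall j x y, sqnorm (am j x - am j y) <= sqnorm (x - y) / u ^+ 2)
  (delta_fin : has_ubound (delta2_set s am)).

Let J_neq0 : (J%:R : R) != 0. Proof. by rewrite pnatr_eq0 -lt0n. Qed.
Let lam := lam_iter E s am gam lam0.

Definition gradmx (l : 'I_J -> 'rV[R]_D) : 'M[R]_(J, D) :=
  Lam_mat (fun j => grad_g s am j (l j)).

Lemma delta2_ge0 : 0 <= delta2 s am.
Proof.
apply: le_trans (sqnorm_ge0 _) (ub_le_sup delta_fin _).
by exists lam0, (Ordinal J_gt0).
Qed.

Lemma frob2_center_gradmx (l : 'I_J -> 'rV[R]_D) :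
  frob2 (center (gradmx l))
    <= 2 * (frob2 (center (Lam_mat l)) / (u ^+ 2 * J%:R ^+ 2) + J%:R * delta2 s am).
Proof.
set lbar := J%:R^-1 *: \sum_(k < J) l k.
have -> : gradmx l = Lam_mat (fun j => grad_g s am j (l j) - grad_g s am j lbar)
                     + Lam_mat (fun j => grad_g s am j lbar).
  by apply/matrixP => i d; rewrite !mxE subrK.
rewrite centerD mulrDr; apply: le_trans (frob2D_le _ _) _.
apply: lerD; rewrite ler_pM2l //.
  apply: le_trans (frob2_center_le J_gt0 _) _.
  rewrite !frob2_row mulr_suml; apply: ler_sum => j _.
  rewrite row_Lam_mat row_center_Lam_mat // -/lbar.
  have -> : grad_g s am j (l j) - grad_g s am j lbar = J%:R^-1 *: (am j lbar - am j (l j)).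
    by apply/rowP => d; rewrite !mxE; ring.
  rewrite sqnormZ sqnormBC (_ : sqnorm _ / _ = J%:R^-1 ^+ 2 * (sqnorm (l j - lbar) / u ^+ 2)).
    exact/ler_wpM2l/am_lip/sqr_ge0.
  by field; rewrite J_neq0 gt_eqF.
rewrite frob2_row (_ : _ * _ = \sum_(j < J) delta2 s am); last first.
  by rewrite sumr_const card_ord mulr_natl.
apply: ler_sum => j _; rewrite row_center_Lam_mat //.
by apply: (ub_le_sup delta_fin); exists lbar, j.
Qed.

Lemma Lam_mat_lam_iterS k :
  Lam_mat (lam k.+1) = E *m (Lam_mat (lam k) - gam k *: gradmx (lam k)).
Proof.
apply/matrixP => i d; rewrite !mxE summxE; apply: eq_bigr => j _.
by rewrite !mxE.
Qed.

Let sig := 1 - specnorm2 (E - J%:R^-1 *: const_mx 1).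
Hypothesis sig_gt0 : 0 < sig.

Lemma consensus_err_iterS k :
  frob2 (center (Lam_mat (lam k.+1)))
    <= (1 - sig / 2) * frob2 (center (Lam_mat (lam k)))
       + (1 - sig) * (2 - sig) / sig * gam k ^+ 2 * frob2 (center (gradmx (lam k))).
Proof.
rewrite Lam_mat_lam_iterS center_mulmx // -[- (gam k *: _)]scaleNr centerD centerZ scaleNr.
apply: le_trans (frob2_mulmx_le _ _) _.
rewrite (_ : specnorm2 _ = 1 - sig); last by rewrite /sig; ring.
exact: frob2B_le_contract.
Qed.

Hypothesis gam_c1 : forall k,
  6 * gam k ^+ 2 / (u ^+ 2 * J%:R ^+ 2) <= (2 - sig) * sig ^+ 2 / (3 * (3 - sig)).
Hypothesis gam_c2 : forall k,
  1 <= gam k ^+ 2 / gam k.+1 ^+ 2 <= 2 / (1 + (1 - sig ^+ 2)).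

Lemma gam_sq_growth k : gam k ^+ 2 <= 2 / (2 - sig ^+ 2) * gam k.+1 ^+ 2.
Proof.
have /andP[ratio_ge1 ratio_le] := gam_c2 k.
(* gam k.+1 = 0 would make the ratio 0, as x / 0 = 0. *)
have gam_neq0 : gam k.+1 ^+ 2 != 0.
  by apply: contraTneq ratio_ge1 => ->; rewrite invr0 mulr0 ler10.
rewrite -ler_pdivrMr ?lt_def ?gam_neq0 ?sqr_ge0 //.
by rewrite (_ : 2 - sig ^+ 2 = 1 + (1 - sig ^+ 2)) //; ring.
Qed.

Lemma consensus_err_le k :
  frob2 (center (Lam_mat (lam k))) <= 18 * gam k ^+ 2 * delta2 s am * J%:R / sig ^+ 3.
Proof.
have sig_le1 : sig <= 1 by rewrite /sig lerBlDr lerDl specnorm2_ge0.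
have Dl_ge0 : 0 <= J%:R * delta2 s am by rewrite mulr_ge0 ?ler0n ?delta2_ge0.
have b_gt0 : 0 < u ^+ 2 * J%:R ^+ 2 by rewrite mulr_gt0 ?exprn_gt0 ?ltr0n.
rewrite (_ : _ / _ = 18 * (J%:R * delta2 s am) / sig ^+ 3 * gam k ^+ 2); last by ring.
elim: k => [|k IH].
  have -> : center (Lam_mat (lam 0)) = 0 := center_Lam_mat_const J_gt0 lam0.
  rewrite (_ : frob2 0 = 0); last first.
    by rewrite /frob2 big1 // => i _; rewrite big1 // => j _; rewrite mxE expr0n.
  by apply/mulr_ge0/sqr_ge0/divr_ge0; [rewrite mulr_ge0 | rewrite exprn_ge0 // ltW].
apply: (consensus_recursion sig_gt0 sig_le1 Dl_ge0 b_gt0 (sqr_ge0 _) (frob2_ge0 _)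
          (gam_c1 k) (gam_sq_growth k) IH).
apply: le_trans (consensus_err_iterS k) _.
rewrite lerD2l ler_wpM2l ?frob2_center_gradmx //.
apply/mulr_ge0/sqr_ge0/divr_ge0/ltW/sig_gt0.
by rewrite mulr_ge0 // subr_ge0 // (le_trans sig_le1) // ler1n.
Qed.

End Iteration.

Unset Implicit Arguments.

Theorem lemma8 (R : realType) (J D : nat) (hJ : (0 < J)%N)
  (adj : rel 'I_J)
  (adj_sym : forall i j, adj i j = adj j i)
  (adj_irr : forall i, ~~ adj i i)
  (adj_conn : forall i j, connect adj i j)
  (f : 'I_J -> 'rV[R]_D -> R) (uf Lf : R)
  (f_sc : forall i, strongly_convex uf (f i))
  (f_sm : forall i, smooth Lf (f i))
  (C : 'I_J -> set 'rV[R]_D)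
  (C_ne : forall i, C i !=set0)
  (C_cpt : forall i, compact (C i))
  (C_cvx : forall i, cvx_set (C i))
  (s : 'rV[R]_D)
  (am : 'I_J -> 'rV[R]_D -> 'rV[R]_D)
  (am_spec : forall i lam, is_argmin (C i) (f i) lam (am i lam))
  (delta_fin : has_ubound (delta2_set s am))
  (E : 'M[R]_J)
  (E_nonneg : forall i j, 0 <= E i j)
  (E_row : forall i, \sum_(j < J) E i j = 1)
  (E_col : forall j, \sum_(i < J) E i j = 1)
  (E_pos : forall i j, (0 < E i j) <-> (adj i j \/ i = j))
  (kappa_lt1 : specnorm2 (E - J%:R^-1 *: const_mx 1) < 1)
  (lam0 : 'rV[R]_D) (gam : nat -> R)
  (gam_c1 : forall k,
     6 * gam k ^+ 2 / (uf ^+ 2 * J%:R ^+ 2)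
       <= let sig := 1 - specnorm2 (E - J%:R^-1 *: const_mx 1) in
          (2 - sig) * sig ^+ 2 / (3 * (3 - sig)))
  (gam_c2 : forall k,
     let sig := 1 - specnorm2 (E - J%:R^-1 *: const_mx 1) in
     1 <= gam k ^+ 2 / gam k.+1 ^+ 2 <= 2 / (1 + (1 - sig ^+ 2))) :
  forall k : nat,
    let sig := 1 - specnorm2 (E - J%:R^-1 *: const_mx 1) in
    let L := Lam_mat (lam_iter E s am gam lam0 k.+1) in
    frob2 (L - J%:R^-1 *: (const_mx 1 *m L))
      <= 18 * gam k.+1 ^+ 2 * delta2 s am * J%:R / sig ^+ 3.
Proof.
move=> k; cbv zeta.
have uf_gt0 : 0 < uf := (f_sc (Ordinal hJ)).1.
have am_lip j x y : sqnorm (am j x - am j y) <= sqnorm (x - y) / uf ^+ 2.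
  exact: (argmin_lipschitz (f_sc j) (C_cvx j) (am_spec j x) (am_spec j y)).
have sig_gt0 : 0 < 1 - specnorm2 (E - J%:R^-1 *: const_mx 1) by rewrite subr_gt0.
exact: (consensus_err_le lam0 hJ E_row E_col uf_gt0 am_lip delta_fin sig_gt0 gam_c1 gam_c2).
Qed.
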